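(* Let $(X,d)$ be a compact metric space and $f:X\to X$ continuous. If $(x,y)$ is a DC1-pair for $f$, then there exists $(z,w)\in\omega((x,y),f\times f)$ (so $(z,w)\in CR(f)^2$) such that $z\sim w$ and $(z,w)$ has property*.
   Context: A pair $(x,y)$ is a DC1-pair if $\limsup_{n}\frac1n|\{0\le i<n: d(f^i(x),f^i(y))<\delta\}|=1$ for every $\delta>0$ and $\limsup_{n}\frac1n|\{0\le i<n: d(f^i(x),f^i(y))>\delta_0\}|=1$ for some $\delta_0>0$. $\omega((x,y),f\times f)$ is the set of limit points of $(f^n(x),f^n(y))$ as $n\to\infty$. A $\delta$-chain of $f$ is a finite sequence $(x_i)_{i=0}^k$, $k\ge1$, with $d(f(x_i),x_{i+1})\le\delta$; a $\delta$-cycle is a $\delta$-chain with $x_0=x_k$. $CR(f)$ is the set of points $x$ such that for every $\delta>0$ there is a $\delta$-cycle starting and ending at $x$. For $x,y\in CR(f)$, $x\sim y$ iff for every $\delta>0$ there are integers $m>0$, $N>0$ such that for every $n\ge N$ there are $\delta$-chains $(x_i)_{i=0}^{mn},(y_i)_{i=0}^{mn}$ in $CR(f)$ with $x_0=y_{mn}=x$, $x_{mn}=y_0=y$. A pair $(x,y)\in CR(f)^2$ has property* if there is $r>0$ such that for every $\delta>0$ there are $\delta$-cycles $(x_i)_{i=0}^k,(y_i)_{i=0}^k$ of $f$ in $CR(f)$ of the same length with $x_0=x_k=x$, $y_0=y_k=y$ and $d(x_i,y_i)>r$ for all $0\le i\le k$. *)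

From Stdlib Require Import Reals Lra Lia List.
Open Scope R_scope.

Definition is_metric {X : Type} (d : X -> X -> R) : Prop :=
  (forall x y, 0 <= d x y) /\
  (forall x y, d x y = 0 <-> x = y) /\
  (forall x y, d x y = d y x) /\
  (forall x y z, d x z <= d x y + d y z).

Definition is_open {X : Type} (d : X -> X -> R) (U : X -> Prop) : Prop :=
  forall x, U x -> exists r, 0 < r /\ forall y, d x y < r -> U y.

Definition is_compact {X : Type} (d : X -> X -> R) : Prop :=
  forall (I : Type) (U : I -> X -> Prop),
    (forall i, is_open d (U i)) ->
    (forall x, exists i, U i x) ->
    exists l : list I, forall x, exists i, In i l /\ U i x.

Definition is_continuous {X : Type} (d : X -> X -> R) (f : X -> X) : Prop :=
  forall x eps, 0 < eps -> exists del, 0 < del /\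
    forall y, d x y < del -> d (f x) (f y) < eps.

Fixpoint iter {X : Type} (n : nat) (f : X -> X) (x : X) : X :=
  match n with O => x | S n' => f (iter n' f x) end.

Fixpoint count_lt (g : nat -> R) (c : R) (n : nat) : nat :=
  match n with
  | O => O
  | S n' => (count_lt g c n' + (if Rlt_dec (g n') c then 1 else 0))%nat
  end.
Fixpoint count_gt (g : nat -> R) (c : R) (n : nat) : nat :=
  match n with
  | O => O
  | S n' => (count_gt g c n' + (if Rlt_dec c (g n') then 1 else 0))%nat
  end.

Definition is_limsup (u : nat -> R) (l : R) : Prop :=
  forall eps, 0 < eps ->
    (forall N : nat, exists n : nat, (N <= n)%nat /\ l - eps < u n) /\
    (exists N : nat, forall n : nat, (N <= n)%nat -> u n < l + eps).

Definition DC1_pair {X : Type} (d : X -> X -> R) (f : X -> X) (x y : X) : Prop :=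
  (forall del, 0 < del ->
     is_limsup (fun n => INR (count_lt (fun i => d (iter i f x) (iter i f y)) del n) / INR n) 1)
  /\
  (exists del0, 0 < del0 /\
     is_limsup (fun n => INR (count_gt (fun i => d (iter i f x) (iter i f y)) del0 n) / INR n) 1).

Definition in_omega_pair {X : Type} (d : X -> X -> R) (f : X -> X) (x y z w : X) : Prop :=
  forall eps, 0 < eps -> forall N : nat, exists n : nat, (N <= n)%nat /\
    d (iter n f x) z < eps /\ d (iter n f y) w < eps.

Definition is_chain {X : Type} (d : X -> X -> R) (f : X -> X) (del : R)
  (xs : nat -> X) (k : nat) : Prop :=
  (1 <= k)%nat /\ forall i, (i < k)%nat -> d (f (xs i)) (xs (S i)) <= del.

Definition CR {X : Type} (d : X -> X -> R) (f : X -> X) (x : X) : Prop :=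
  forall del, 0 < del -> exists (k : nat) (xs : nat -> X),
    is_chain d f del xs k /\ xs O = x /\ xs k = x.

Definition chain_in_CR {X : Type} (d : X -> X -> R) (f : X -> X)
  (xs : nat -> X) (k : nat) : Prop :=
  forall i, (i <= k)%nat -> CR d f (xs i).

Definition CR_sim {X : Type} (d : X -> X -> R) (f : X -> X) (x y : X) : Prop :=
  CR d f x /\ CR d f y /\
  forall del, 0 < del -> exists m N : nat, (0 < m)%nat /\ (0 < N)%nat /\
    forall n : nat, (N <= n)%nat -> exists xs ys : nat -> X,
      is_chain d f del xs (m * n) /\ chain_in_CR d f xs (m * n) /\
      is_chain d f del ys (m * n) /\ chain_in_CR d f ys (m * n) /\
      xs O = x /\ ys (m * n)%nat = x /\ xs (m * n)%nat = y /\ ys O = y.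

Definition property_star {X : Type} (d : X -> X -> R) (f : X -> X) (x y : X) : Prop :=
  CR d f x /\ CR d f y /\
  exists r, 0 < r /\ forall del, 0 < del -> exists (k : nat) (xs ys : nat -> X),
    is_chain d f del xs k /\ chain_in_CR d f xs k /\
    is_chain d f del ys k /\ chain_in_CR d f ys k /\
    xs O = x /\ xs k = x /\ ys O = y /\ ys k = y /\
    forall i, (i <= k)%nat -> r < d (xs i) (ys i).

From Stdlib Require Import Reals Lra Lia List ClassicalEpsilon.
Open Scope R_scope.

(** The proof works in the product system (X × X, f × f), with the max metric
  and the orbit of p = (x, y); this system is again compact and continuous.
  Its omega-limit set Ω is closed, consists of chain-recurrent points, and any
  two points of Ω are joined by δ-chains inside Ω, because they are shadowed
  by the orbit of p. The two halves of the DC1 condition produce two points: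
  - infinitely many close approaches d(fⁱx, fⁱy) < ε give (u, u) ∈ Ω;
  - arbitrarily long runs with d(fⁱx, fⁱy) > δ0, together with a pigeonhole
    argument on a finite net, give for every δ a δ-cycle inside
    Ω ∩ {d ≥ δ0/2}; a limit of their base points is a pair (z, w) carrying
    such δ-cycles for every δ, which projected to X is property*.
  Joining (z, w) to (u, u) and back inside Ω yields chains z → u, w → u and
  u → z, u → w of matching lengths; concatenating and repeating them gives
  z ~ w. *)

Definition inv_succ (k : nat) : R := / INR (S k).

Lemma inv_succ_pos k : 0 < inv_succ k.
Proof. apply Rinv_0_lt_compat, lt_0_INR. lia. Qed.

Lemma inv_succ_small eps : 0 < eps -> exists K, forall k, (K <= k)%nat -> inv_succ k < eps.
Proof.
  intros Heps. destruct (archimed_cor1 eps Heps) as [K [HK HK0]].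
  exists K. intros k Hk. apply Rle_lt_trans with (/ INR K); [|exact HK].
  apply Rinv_le_contravar; [apply lt_0_INR; exact HK0 | apply le_INR; lia].
Qed.

(** ** Densities of the DC1 condition *)

Lemma count_gt_le g c n : (count_gt g c n <= n)%nat.
Proof. induction n as [|n IH]; simpl; [lia|]. destruct (Rlt_dec c (g n)); lia. Qed.

Lemma count_gt_shift g c a m : (count_gt g c (a + m) <= count_gt g c a + m)%nat.
Proof.
  induction m as [|m IH]; [rewrite Nat.add_0_r; lia|].
  rewrite Nat.add_succ_r. simpl. destruct (Rlt_dec c (g (a + m)%nat)); lia.
Qed.

Lemma count_gt_window g c a B j : (a <= j < a + B)%nat -> ~ c < g j ->
  (count_gt g c (a + B) + 1 <= count_gt g c a + B)%nat.
Proof.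
  intros Hj Hnot.
  pose proof (count_gt_shift g c (S j) (a + B - S j)) as Hright.
  replace (S j + (a + B - S j))%nat with (a + B)%nat in Hright by lia.
  assert (Hstep : count_gt g c (S j) = count_gt g c j).
  { simpl. destruct (Rlt_dec c (g j)); [contradiction | lia]. }
  pose proof (count_gt_shift g c a (j - a)) as Hleft.
  replace (a + (j - a))%nat with j in Hleft by lia. lia.
Qed.

Section NoLongRuns.
Variables (g : nat -> R) (c : R) (T B : nat).
Hypothesis HB : (1 <= B)%nat.
Hypothesis Hmiss : forall i0, (T <= i0)%nat -> exists j, (i0 <= j < i0 + B)%nat /\ ~ c < g j.

Lemma count_gt_blocks m : (count_gt g c (T + m * B) + m <= T + m * B)%nat.
Proof.
  induction m as [|m IH].
  - rewrite Nat.mul_0_l, Nat.add_0_r. apply count_gt_le.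
  - destruct (Hmiss (T + m * B)%nat ltac:(lia)) as [j [Hj Hnot]].
    pose proof (count_gt_window g c (T + m * B) B j Hj Hnot).
    replace (T + S m * B)%nat with (T + m * B + B)%nat by lia. lia.
Qed.

Lemma count_gt_deficit n : (T <= n)%nat -> (n < T + B * (n - count_gt g c n) + B)%nat.
Proof.
  intros Hn. set (m := ((n - T) / B)%nat).
  pose proof (Nat.div_mod_eq (n - T) B) as Hdiv. fold m in Hdiv.
  pose proof (Nat.mod_upper_bound (n - T) B ltac:(lia)) as Hmod.
  pose proof (count_gt_blocks m) as Hblocks.
  pose proof (count_gt_shift g c (T + m * B) (n - (T + m * B))) as Hrest.
  replace (T + m * B + (n - (T + m * B)))%nat with n in Hrest by lia.
  assert (B * m <= B * (n - count_gt g c n))%nat by (apply Nat.mul_le_mono_l; lia).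
  lia.
Qed.

End NoLongRuns.

Lemma density_deficit (c n B : nat) : (1 <= B)%nat -> (1 <= n)%nat -> (c <= n)%nat ->
  1 - / (2 * INR B) < INR c / INR n -> (2 * B * (n - c) < n)%nat.
Proof.
  intros HB Hn Hc Hdens.
  assert (HnR : 0 < INR n) by (apply lt_0_INR; lia).
  assert (HBR : 1 <= INR B) by (apply (le_INR 1); lia).
  assert (Hcn : (1 - / (2 * INR B)) * INR n < INR c).
  { replace (INR c) with (INR c / INR n * INR n) by (field; lra).
    apply Rmult_lt_compat_r; assumption. }
  assert (Hscaled : (2 * INR B - 1) * INR n < INR c * (2 * INR B)).
  { replace ((2 * INR B - 1) * INR n) with ((1 - / (2 * INR B)) * INR n * (2 * INR B))
      by (field; lra).
    apply Rmult_lt_compat_r; lra. }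
  apply INR_lt. rewrite !mult_INR, minus_INR by lia. simpl (INR 2). lra.
Qed.

Lemma long_far_run g c T B : (1 <= B)%nat ->
  is_limsup (fun n => INR (count_gt g c n) / INR n) 1 ->
  exists i0, (T <= i0)%nat /\ forall j, (i0 <= j < i0 + B)%nat -> c < g j.
Proof.
  intros HB Hlim. apply NNPP. intros Hnone.
  assert (Hmiss : forall i0, (T <= i0)%nat -> exists j, (i0 <= j < i0 + B)%nat /\ ~ c < g j).
  { intros i0 Hi0. apply NNPP. intros Hall. apply Hnone. exists i0. split; [exact Hi0|].
    intros j Hj. apply NNPP. intros Hnot. apply Hall. exists j. auto. }
  assert (Heps : 0 < / (2 * INR B)).
  { apply Rinv_0_lt_compat. assert (1 <= INR B) by (apply (le_INR 1); lia). lra. }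
  destruct (proj1 (Hlim _ Heps) (2 * T + 2 * B)%nat) as [n [Hn Hdens]].
  pose proof (density_deficit _ n B HB ltac:(lia) (count_gt_le g c n) Hdens).
  pose proof (count_gt_deficit g c T B HB Hmiss n ltac:(lia)).
  nia.
Qed.

Lemma count_lt_bounded g c N : (forall i, (N <= i)%nat -> ~ g i < c) ->
  forall n, (count_lt g c n <= Nat.min n N)%nat.
Proof.
  intros Hnone n. induction n as [|n IH]; cbn [count_lt]; [lia|].
  destruct (Rlt_dec (g n) c) as [Hlt|Hlt]; [|lia].
  destruct (Nat.lt_ge_cases n N) as [HnN|HnN]; [lia | exfalso; exact (Hnone n HnN Hlt)].
Qed.

Lemma frequently_close g c : is_limsup (fun n => INR (count_lt g c n) / INR n) 1 ->
  forall N, exists i, (N <= i)%nat /\ g i < c.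
Proof.
  intros Hlim N. apply NNPP. intros Hnone.
  assert (Hfar : forall i, (N <= i)%nat -> ~ g i < c).
  { intros i Hi Hlt. apply Hnone. exists i. auto. }
  destruct (proj1 (Hlim (1/2) ltac:(lra)) (2 * N + 1)%nat) as [n [Hn Hdens]].
  pose proof (count_lt_bounded g c N Hfar n) as Hbound.
  assert (Hle : (count_lt g c n <= N)%nat) by lia.
  assert (HnR : 0 < INR n) by (apply lt_0_INR; lia).
  assert (Hhalf : 1 / 2 * INR n < INR (count_lt g c n)).
  { replace (INR (count_lt g c n)) with (INR (count_lt g c n) / INR n * INR n) by (field; lra).
    apply Rmult_lt_compat_r; lra. }
  apply le_INR in Hle. apply le_INR in Hn. rewrite plus_INR, mult_INR in Hn.
  simpl in Hn. lra.
Qed.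

(** ** Chains *)

Section Chains.
Variables (X : Type) (d : X -> X -> R) (f : X -> X).

Definition chain_in (del : R) (A : X -> Prop) (xs : nat -> X) (k : nat) (a b : X) : Prop :=
  is_chain d f del xs k /\ (forall i, (i <= k)%nat -> A (xs i)) /\ xs O = a /\ xs k = b.

Definition concat_seq (xs : nat -> X) (k : nat) (ys : nat -> X) : nat -> X :=
  fun i => if (i <=? k)%nat then xs i else ys (i - k)%nat.

Lemma chain_in_concat del A xs k ys l a b c :
  chain_in del A xs k a b -> chain_in del A ys l b c ->
  chain_in del A (concat_seq xs k ys) (k + l) a c.
Proof.
  intros [[Hk Hx] [Ax [Hx0 Hxk]]] [[Hl Hy] [Ay [Hy0 Hyl]]]. unfold concat_seq.
  split; [split; [lia|] | split; [|split]].
  - intros i Hi. destruct (Nat.leb_spec i k); destruct (Nat.leb_spec (S i) k).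
    + apply Hx. lia.
    + replace i with k by lia. replace (S k - k)%nat with 1%nat by lia.
      rewrite Hxk, <- Hy0. apply Hy. lia.
    + lia.
    + replace (S i - k)%nat with (S (i - k)) by lia. apply Hy. lia.
  - intros i Hi. destruct (Nat.leb_spec i k); [apply Ax | apply Ay]; lia.
  - exact Hx0.
  - destruct (Nat.leb_spec (k + l) k); [lia|].
    replace (k + l - k)%nat with l by lia. exact Hyl.
Qed.

(** Running [n - 1] times around a cycle at [a], then along a chain from [a] to [b]. *)
Lemma chain_in_repeat del A cyc ch c a b n :
  chain_in del A cyc c a a -> chain_in del A ch c a b -> (1 <= n)%nat ->
  exists xs, chain_in del A xs (c * n) a b.
Proof.
  intros Hcyc Hch. induction n as [|n IH]; intros Hn; [lia|].
  destruct (Nat.eq_dec n 0) as [->|Hn0].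
  - exists ch. rewrite Nat.mul_1_r. exact Hch.
  - destruct IH as [xs Hxs]; [lia|]. exists (concat_seq cyc c xs).
    replace (c * S n)%nat with (c + c * n)%nat by lia.
    exact (chain_in_concat _ _ _ _ _ _ _ _ _ Hcyc Hxs).
Qed.

(** If [z] and [w] reach a common hub [u] by chains of one common length, and are
    reached from it by chains of another common length, then [z ~ w]: the chains
    z → u → z (repeated) followed by z → u → w all have length a multiple of
    the same period, and symmetrically from [w]. *)
Lemma CR_sim_via_hub z w u : CR d f z -> CR d f w ->
  (forall del, 0 < del -> exists k1 k2 (zu wu uz uw : nat -> X),
     chain_in del (CR d f) zu k1 z u /\ chain_in del (CR d f) wu k1 w u /\
     chain_in del (CR d f) uz k2 u z /\ chain_in del (CR d f) uw k2 u w) ->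
  CR_sim d f z w.
Proof.
  intros Cz Cw Hhub. split; [exact Cz|]. split; [exact Cw|]. intros del Hdel.
  destruct (Hhub del Hdel) as (k1 & k2 & zu & wu & uz & uw & Hzu & Hwu & Huz & Huw).
  exists (k1 + k2)%nat, 1%nat. split; [destruct Hzu as [[? _] _]; lia|]. split; [lia|].
  intros n Hn.
  destruct (chain_in_repeat del _ _ _ _ z w n (chain_in_concat _ _ _ _ _ _ _ _ _ Hzu Huz)
              (chain_in_concat _ _ _ _ _ _ _ _ _ Hzu Huw) Hn) as [xs (Hx & Ax & Hx0 & Hxe)].
  destruct (chain_in_repeat del _ _ _ _ w z n (chain_in_concat _ _ _ _ _ _ _ _ _ Hwu Huw)
              (chain_in_concat _ _ _ _ _ _ _ _ _ Hwu Huz) Hn) as [ys (Hy & Ay & Hy0 & Hye)].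
  exists xs, ys. unfold chain_in_CR.
  repeat (split; [assumption|]); assumption.
Qed.

Lemma property_star_of_cycles z w r : CR d f z -> CR d f w -> 0 < r ->
  (forall del, 0 < del -> exists k (xs ys : nat -> X),
     chain_in del (CR d f) xs k z z /\ chain_in del (CR d f) ys k w w /\
     forall i, (i <= k)%nat -> r < d (xs i) (ys i)) ->
  property_star d f z w.
Proof.
  intros Cz Cw Hr Hcyc. split; [exact Cz|]. split; [exact Cw|]. exists r. split; [exact Hr|].
  intros del Hdel.
  destruct (Hcyc del Hdel) as (k & xs & ys & (Hx & Ax & Hx0 & Hxk) & (Hy & Ay & Hy0 & Hyk) & Hapart).
  exists k, xs, ys. unfold chain_in_CR.
  repeat (split; [assumption|]); assumption.
Qed.

End Chains.

Arguments chain_in {X} d f del A xs k a b.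

(** ** Metric spaces and compactness *)

Section MetricFacts.
Variables (P : Type) (dist : P -> P -> R).
Hypothesis Hdist : is_metric dist.

Lemma dist_nonneg a b : 0 <= dist a b. Proof. apply Hdist. Qed.
Lemma dist_self a : dist a a = 0. Proof. apply Hdist. reflexivity. Qed.
Lemma dist_zero a b : dist a b = 0 -> a = b. Proof. apply Hdist. Qed.
Lemma dist_sym a b : dist a b = dist b a. Proof. apply Hdist. Qed.
Lemma dist_triangle a b c : dist a c <= dist a b + dist b c. Proof. apply Hdist. Qed.

Lemma ball_open z r : is_open dist (fun v => dist z v < r).
Proof.
  intros v Hv. exists (r - dist z v). split; [lra|].
  intros v' Hv'. pose proof (dist_triangle z v v'). lra.
Qed.

End MetricFacts.

Arguments dist_nonneg {P dist} Hdist a b.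
Arguments dist_self {P dist} Hdist a.
Arguments dist_zero {P dist} Hdist a b.
Arguments dist_sym {P dist} Hdist a b.
Arguments dist_triangle {P dist} Hdist a b c.

Definition cluster {P : Type} (dist : P -> P -> R) (s : nat -> P) (q : P) : Prop :=
  forall eps, 0 < eps -> forall N, exists n, (N <= n)%nat /\ dist (s n) q < eps.

Definition seq_compact {P : Type} (dist : P -> P -> R) : Prop :=
  forall s : nat -> P, exists q, cluster dist s q.

Definition totally_bounded {P : Type} (dist : P -> P -> R) : Prop :=
  forall e, 0 < e -> exists l : list P, forall q, exists c, In c l /\ dist c q < e.

Definition closed_set {P : Type} (dist : P -> P -> R) (A : P -> Prop) : Prop :=
  forall q, (forall eps, 0 < eps -> exists a, A a /\ dist a q < eps) -> A q.

Lemma closed_set_and {P : Type} (dist : P -> P -> R) (A B : P -> Prop) :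
  closed_set dist A -> closed_set dist B -> closed_set dist (fun q => A q /\ B q).
Proof.
  intros HA HB q Happrox. split; [apply HA | apply HB]; intros eps Heps;
    destruct (Happrox eps Heps) as [a [[Ha Hb] Hd]]; eauto.
Qed.

Lemma cluster_subseq {P : Type} (dist : P -> P -> R) (s : nat -> P) (h : nat -> nat) q :
  (forall k, (k <= h k)%nat) -> cluster dist (fun k => s (h k)) q -> cluster dist s q.
Proof.
  intros Hh Hq eps Heps N. destruct (Hq eps Heps N) as [k [Hk Hkq]].
  exists (h k). split; [specialize (Hh k); lia | exact Hkq].
Qed.

Lemma list_upper_bound {A : Type} (h : A -> nat) (l : list A) :
  exists M, forall a, In a l -> (h a <= M)%nat.
Proof.
  induction l as [|b l [M HM]]; [exists O; intros a [] |].
  exists (Nat.max (h b) M). intros a [<-|Ha]; [lia | specialize (HM a Ha); lia].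
Qed.

Section CompactMetric.
Variables (P : Type) (dist : P -> P -> R).
Hypothesis Hdist : is_metric dist.
Hypothesis Hcpt : is_compact dist.

(** If no point were a cluster point of [s], every point would have a ball that [s]
    eventually leaves; finitely many such balls cover the space, a contradiction. *)
Lemma compact_seq_compact : seq_compact dist.
Proof.
  intros s. apply NNPP. intros Hnone.
  assert (Hleave : forall z, exists rN : R * nat,
             0 < fst rN /\ forall n, (snd rN <= n)%nat -> fst rN <= dist (s n) z).
  { intros z. apply NNPP. intros Hz. apply Hnone. exists z. intros eps Heps N.
    apply NNPP. intros HN. apply Hz. exists (eps, N). split; [exact Heps|].
    intros n Hn. apply Rnot_lt_le. intros Hlt. apply HN. exists n. auto. }
  destruct (choice _ Hleave) as [rad Hrad].
  destruct (Hcpt P (fun z v => dist z v < fst (rad z))) as [l Hl].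
  - intros z. apply ball_open, Hdist.
  - intros z. exists z. rewrite (dist_self Hdist). apply Hrad.
  - destruct (list_upper_bound (fun z => snd (rad z)) l) as [M HM].
    destruct (Hl (s M)) as [z [Hz Hsz]].
    pose proof (proj2 (Hrad z) M (HM z Hz)) as Hfar.
    rewrite (dist_sym Hdist) in Hfar. lra.
Qed.

Lemma compact_totally_bounded : totally_bounded dist.
Proof.
  intros e He. destruct (Hcpt P (fun c v => dist c v < e)) as [l Hl].
  - intros c. apply ball_open, Hdist.
  - intros v. exists v. rewrite (dist_self Hdist). exact He.
  - exists l. exact Hl.
Qed.

End CompactMetric.

Lemma pigeonhole {B : Type} (h : nat -> B) (l : list B) : (forall t, In (h t) l) ->
  forall i0, exists a b, (i0 <= a < b)%nat /\ (b <= i0 + length l)%nat /\ h a = h b.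
Proof.
  intros Hin i0. apply NNPP. intros Hnone.
  assert (Hinj : NoDup (map h (seq i0 (S (length l))))).
  { apply NoDup_map_NoDup_ForallPairs; [|apply seq_NoDup].
    intros a b Ha Hb Heq. apply in_seq in Ha, Hb. apply NNPP. intros Hab. apply Hnone.
    destruct (Nat.lt_total a b) as [Hlt|[Hlt|Hlt]]; [exists a, b | contradiction | exists b, a];
      repeat split; auto; lia. }
  assert (Hincl : incl (map h (seq i0 (S (length l)))) l).
  { intros v Hv. apply in_map_iff in Hv. destruct Hv as [t [<- _]]. apply Hin. }
  pose proof (NoDup_incl_length Hinj Hincl) as Hlen.
  rewrite length_map, length_seq in Hlen. lia.
Qed.

(** ** Compact dynamical systems *)

Section CompactSystem.
Variables (P : Type) (dist : P -> P -> R) (g : P -> P).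
Hypothesis Hdist : is_metric dist.
Hypothesis Hseq : seq_compact dist.
Hypothesis Hnet : totally_bounded dist.
Hypothesis Hg : is_continuous dist g.

(** Continuity is uniform: otherwise pairs of points [1/(k+1)]-close with images
    [eps]-apart would cluster at a point of discontinuity. *)
Lemma uniform_continuity eps : 0 < eps ->
  exists eta, 0 < eta /\ forall a b, dist a b < eta -> dist (g a) (g b) < eps.
Proof.
  intros Heps. apply NNPP. intros Hnone.
  assert (Hbad : forall k, exists ab : P * P,
             dist (fst ab) (snd ab) < inv_succ k /\ eps <= dist (g (fst ab)) (g (snd ab))).
  { intros k. apply NNPP. intros Hk. apply Hnone. exists (inv_succ k).
    split; [apply inv_succ_pos|]. intros a b Hab. apply Rnot_le_lt. intros Hle.
    apply Hk. exists (a, b). auto. }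
  destruct (choice _ Hbad) as [bad Hbad'].
  destruct (Hseq (fun k => fst (bad k))) as [z Hz].
  destruct (Hg z (eps / 2) ltac:(lra)) as [del [Hdel Hcont]].
  destruct (inv_succ_small (del / 2) ltac:(lra)) as [K HK].
  destruct (Hz (del / 2) ltac:(lra) K) as [k [Hk Hkz]]. cbv beta in Hkz.
  destruct (Hbad' k) as [Hclose Hfar]. specialize (HK k Hk).
  set (a := fst (bad k)) in *. set (b := snd (bad k)) in *.
  assert (Ha : dist (g z) (g a) < eps / 2).
  { apply Hcont. rewrite (dist_sym Hdist). lra. }
  assert (Hb : dist (g z) (g b) < eps / 2).
  { apply Hcont. pose proof (dist_triangle Hdist z a b) as Htri.
    rewrite (dist_sym Hdist z a) in Htri. lra. }
  pose proof (dist_triangle Hdist (g a) (g z) (g b)) as Htri.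
  rewrite (dist_sym Hdist (g a) (g z)) in Htri. lra.
Qed.

(** Any sequence returns [del]-close to itself within a bounded time [L]: cover the
    space by finitely many [del/2]-balls and apply the pigeonhole principle. *)
Lemma bounded_return (s : nat -> P) del : 0 < del -> exists L, forall i0,
  exists a b, (i0 <= a < b)%nat /\ (b <= i0 + L)%nat /\ dist (s b) (s a) < del.
Proof.
  intros Hdel. destruct (Hnet (del / 2) ltac:(lra)) as [l Hl].
  destruct (choice (fun t c => In c l /\ dist c (s t) < del / 2) (fun t => Hl (s t)))
    as [center Hcenter].
  exists (length l). intros i0.
  destruct (pigeonhole center l (fun t => proj1 (Hcenter t)) i0) as [a [b [Hab [Hb Heq]]]].
  exists a, b. split; [exact Hab|]. split; [exact Hb|].
  destruct (Hcenter a) as [_ Ha]. destruct (Hcenter b) as [_ Hb']. rewrite Heq in Ha.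
  pose proof (dist_triangle Hdist (s b) (center b) (s a)) as Htri.
  rewrite (dist_sym Hdist (s b) (center b)) in Htri. lra.
Qed.

Lemma retarget_cycle (A : P -> Prop) q q' xs k del e eta :
  chain_in dist g e A xs k q' q' -> A q -> e <= del / 3 -> eta <= del / 3 ->
  dist q' q < eta -> (forall v, dist q v < eta -> dist (g q) (g v) < del / 3) ->
  chain_in dist g del A (fun i => if orb (i =? 0)%nat (i =? k)%nat then q else xs i) k q q.
Proof.
  intros [[Hk Hx] [Ax [Hx0 Hxk]]] Aq He Heta Hqq' Hcont.
  assert (Hdel : 0 < del) by (pose proof (dist_nonneg Hdist q' q); lra).
  set (ys := fun i => if orb (i =? 0)%nat (i =? k)%nat then q else xs i).
  assert (Hstart : forall i, (i < k)%nat -> dist (g (ys i)) (g (xs i)) < del / 3).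
  { intros i Hi. unfold ys.
    destruct (Nat.eqb_spec i 0) as [->|Hi0]; [destruct (Nat.eqb_spec 0 k)|destruct (Nat.eqb_spec i k)];
      simpl; try lia.
    - rewrite Hx0. apply Hcont. rewrite (dist_sym Hdist). exact Hqq'.
    - rewrite (dist_self Hdist). lra. }
  assert (Hend : forall i, (i < k)%nat -> dist (xs (S i)) (ys (S i)) < del / 3).
  { intros i Hi. unfold ys. destruct (Nat.eqb_spec (S i) k) as [Hik|Hik]; simpl.
    - rewrite Hik, Hxk. lra.
    - rewrite (dist_self Hdist). lra. }
  split; [split; [exact Hk|] | split; [|split]].
  - intros i Hi. pose proof (Hx i Hi). pose proof (Hstart i Hi). pose proof (Hend i Hi).
    pose proof (dist_triangle Hdist (g (ys i)) (g (xs i)) (ys (S i))).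
    pose proof (dist_triangle Hdist (g (xs i)) (xs (S i)) (ys (S i))). lra.
  - intros i Hi. unfold ys. destruct (orb _ _); [exact Aq | apply Ax, Hi].
  - reflexivity.
  - unfold ys. rewrite Nat.eqb_refl, Bool.orb_true_r. reflexivity.
Qed.

(** If a closed set [A] carries arbitrarily fine cycles, then some point of [A] is the base
    of [del]-cycles in [A] for every [del]: take a cluster point of the base points. *)
Lemma cycles_at_limit_point (A : P -> Prop) : closed_set dist A ->
  (forall del, 0 < del -> exists q k xs, chain_in dist g del A xs k q q) ->
  exists q, A q /\ forall del, 0 < del -> exists k xs, chain_in dist g del A xs k q q.
Proof.
  intros HA Hcyc.
  destruct (choice (fun n q => exists k xs, chain_in dist g (inv_succ n) A xs k q q))
    as [base Hbase].
  { intros n. exact (Hcyc _ (inv_succ_pos n)). }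
  destruct (Hseq base) as [q Hq].
  assert (Aq : A q).
  { apply HA. intros eps Heps. destruct (Hq eps Heps O) as [n [_ Hn]].
    exists (base n). split; [|exact Hn].
    destruct (Hbase n) as [k [xs (_ & Ax & Hx0 & _)]]. rewrite <- Hx0. apply Ax. lia. }
  exists q. split; [exact Aq|]. intros del Hdel.
  destruct (Hg q (del / 3) ltac:(lra)) as [del_q [Hdel_q Hcont]].
  set (eta := Rmin del_q (del / 3)).
  assert (Heta : 0 < eta) by (apply Rmin_glb_lt; lra).
  destruct (inv_succ_small (del / 3) ltac:(lra)) as [K HK].
  destruct (Hq eta Heta K) as [n [Hn Hnq]].
  destruct (Hbase n) as [k [xs Hxs]].
  exists k. eexists. apply (retarget_cycle A q (base n) xs k del (inv_succ n) eta Hxs Aq).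
  - apply Rlt_le, HK, Hn.
  - apply Rmin_r.
  - exact Hnq.
  - intros v Hv. apply Hcont. apply Rlt_le_trans with eta; [exact Hv | apply Rmin_l].
Qed.

Section OmegaLimitSet.
Variable p : P.

Definition omega (q : P) : Prop := cluster dist (fun n => iter n g p) q.

Lemma omega_closed : closed_set dist omega.
Proof.
  intros q Happrox eps Heps N.
  destruct (Happrox (eps / 2) ltac:(lra)) as [q' [Hq' Hq'q]].
  destruct (Hq' (eps / 2) ltac:(lra) N) as [n [Hn Hnq']]. cbv beta in Hnq'.
  exists n. split; [exact Hn|].
  pose proof (dist_triangle Hdist (iter n g p) q' q). lra.
Qed.

(** Eventually the orbit stays [eta]-close to the omega-limit set; [sel n] picks a
    nearby point of it. Otherwise a subsequence staying [eta]-far from the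
    omega-limit set would have a cluster point in it. *)
Lemma omega_near_orbit eta : 0 < eta -> exists T (sel : nat -> P),
  forall n, (T <= n)%nat -> omega (sel n) /\ dist (iter n g p) (sel n) < eta.
Proof.
  intros Heta.
  assert (Hnear : exists T, forall n, (T <= n)%nat ->
                    exists q, omega q /\ dist (iter n g p) q < eta).
  { apply NNPP. intros Hnone.
    assert (Hfar : forall T, exists n, (T <= n)%nat /\
                     forall q, omega q -> eta <= dist (iter n g p) q).
    { intros T. apply NNPP. intros HT. apply Hnone. exists T. intros n Hn.
      apply NNPP. intros Hq. apply HT. exists n. split; [exact Hn|].
      intros q Hoq. apply Rnot_lt_le. intros Hlt. apply Hq. exists q. auto. }
    destruct (choice _ Hfar) as [h Hh].
    destruct (Hseq (fun k => iter (h k) g p)) as [q Hq].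
    assert (Hoq : omega q).
    { apply (cluster_subseq _ _ h); [intros k; apply Hh | exact Hq]. }
    destruct (Hq eta Heta O) as [k [_ Hk]].
    pose proof (proj2 (Hh k) q Hoq). lra. }
  destruct Hnear as [T HT].
  destruct (choice (fun n q => (T <= n)%nat -> omega q /\ dist (iter n g p) q < eta))
    as [sel Hsel].
  { intros n. destruct (Nat.le_gt_cases T n) as [Hn|Hn].
    - destruct (HT n Hn) as [q Hq]. exists q. auto.
    - exists p. intros. lia. }
  exists T, sel. exact Hsel.
Qed.

Lemma shadow_chain del eta (s : nat -> P) n k :
  (forall a b, dist a b < eta -> dist (g a) (g b) < del / 2) -> (1 <= k)%nat ->
  (forall i, (i <= k)%nat -> dist (s i) (iter (n + i) g p) < Rmin eta (del / 2)) ->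
  is_chain dist g del s k.
Proof.
  intros HU Hk Hnear. split; [exact Hk|]. intros i Hi.
  pose proof (Hnear i ltac:(lia)) as Hi0. pose proof (Hnear (S i) ltac:(lia)) as Hi1.
  rewrite Nat.add_succ_r in Hi1. cbn [iter] in Hi1.
  pose proof (Rmin_l eta (del / 2)). pose proof (Rmin_r eta (del / 2)).
  assert (Hgi : dist (g (s i)) (g (iter (n + i) g p)) < del / 2) by (apply HU; lra).
  pose proof (dist_triangle Hdist (g (s i)) (g (iter (n + i) g p)) (s (S i))) as Htri.
  rewrite (dist_sym Hdist (g (iter (n + i) g p)) (s (S i))) in Htri. lra.
Qed.

(** Any two points of the omega-limit set are joined by [del]-chains inside it: follow
    the orbit from a visit near [q] to a later visit near [q'], replacing each orbit
    point by a nearby point of the omega-limit set. *)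
Lemma omega_chain_connected q q' del : 0 < del -> omega q -> omega q' ->
  exists k xs, chain_in dist g del omega xs k q q'.
Proof.
  intros Hdel Hq Hq'.
  destruct (uniform_continuity (del / 2) ltac:(lra)) as [eta [Heta HU]].
  set (e := Rmin eta (del / 2)).
  assert (He : 0 < e) by (apply Rmin_glb_lt; lra).
  destruct (omega_near_orbit e He) as [T [sel Hsel]].
  destruct (Hq e He T) as [n [Hn Hnq]].
  destruct (Hq' e He (S n)) as [m [Hm Hmq']].
  set (k := (m - n)%nat).
  exists k, (fun i => if (i =? 0)%nat then q else if (i =? k)%nat then q' else sel (n + i)%nat).
  split; [|split; [|split]].
  - apply (shadow_chain del eta _ n k HU); [unfold k; lia|].
    intros i Hi. rewrite (dist_sym Hdist).
    destruct (Nat.eqb_spec i 0); [|destruct (Nat.eqb_spec i k)].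
    + subst i. rewrite Nat.add_0_r. exact Hnq.
    + subst i. replace (n + k)%nat with m by (unfold k; lia). exact Hmq'.
    + apply Hsel. lia.
  - intros i Hi. destruct (Nat.eqb_spec i 0); [|destruct (Nat.eqb_spec i k)]; auto.
    apply Hsel. lia.
  - reflexivity.
  - destruct (Nat.eqb_spec k 0); [unfold k in *; lia|]. rewrite Nat.eqb_refl. reflexivity.
Qed.

Lemma omega_CR q : omega q -> CR dist g q.
Proof.
  intros Hq del Hdel.
  destruct (omega_chain_connected q q del Hdel Hq Hq) as [k [xs (Hch & _ & Hx0 & Hxk)]].
  exists k, xs. auto.
Qed.

Lemma omega_meets_closed (A : P -> Prop) : closed_set dist A ->
  (forall eps, 0 < eps -> forall N, exists n a, (N <= n)%nat /\ A a /\ dist (iter n g p) a < eps) ->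
  exists q, omega q /\ A q.
Proof.
  intros HA Hvisit.
  destruct (choice (fun k (na : nat * P) =>
              (k <= fst na)%nat /\ A (snd na) /\ dist (iter (fst na) g p) (snd na) < inv_succ k))
    as [h Hh].
  { intros k. destruct (Hvisit _ (inv_succ_pos k) k) as [n [a Hna]]. exists (n, a). exact Hna. }
  destruct (Hseq (fun k => iter (fst (h k)) g p)) as [q Hq].
  exists q. split.
  - apply (cluster_subseq _ _ (fun k => fst (h k))); [intros k; apply Hh | exact Hq].
  - apply HA. intros eps Heps.
    destruct (inv_succ_small (eps / 2) ltac:(lra)) as [K HK].
    destruct (Hq (eps / 2) ltac:(lra) K) as [k [Hk Hkq]]. cbv beta in Hkq.
    destruct (Hh k) as [_ [Ha Hda]]. specialize (HK k Hk).
    exists (snd (h k)). split; [exact Ha|].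
    pose proof (dist_triangle Hdist (snd (h k)) (iter (fst (h k)) g p) q) as Htri.
    rewrite (dist_sym Hdist (snd (h k)) (iter (fst (h k)) g p)) in Htri. lra.
Qed.

Lemma cycle_near_return (sel : nat -> P) a k del e eta :
  (forall u v, dist u v < eta -> dist (g u) (g v) < del / 3) -> e <= eta -> e <= del / 3 ->
  (1 <= k)%nat -> (forall j, (j <= k)%nat -> dist (iter (a + j) g p) (sel (a + j)%nat) < e) ->
  dist (iter (a + k) g p) (iter a g p) < del / 3 ->
  is_chain dist g del (fun j => if (j =? k)%nat then sel a else sel (a + j)%nat) k.
Proof.
  intros HU He1 He2 Hk Hsel Hret. split; [exact Hk|]. intros j Hj.
  assert (Hdel : 0 < del) by (pose proof (dist_nonneg Hdist (iter (a + k) g p) (iter a g p)); lra).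
  destruct (Nat.eqb_spec j k); [lia|].
  assert (Hgj : dist (g (sel (a + j)%nat)) (iter (a + S j) g p) < del / 3).
  { rewrite Nat.add_succ_r. cbn [iter]. rewrite (dist_sym Hdist). apply HU.
    specialize (Hsel j ltac:(lia)). lra. }
  destruct (Nat.eqb_spec (S j) k) as [Hjk|Hjk].
  - subst k. specialize (Hsel O ltac:(lia)). rewrite Nat.add_0_r in Hsel.
    pose proof (dist_triangle Hdist (g (sel (a + j)%nat)) (iter (a + S j) g p) (sel a)).
    pose proof (dist_triangle Hdist (iter (a + S j) g p) (iter a g p) (sel a)). lra.
  - specialize (Hsel (S j) ltac:(lia)).
    pose proof (dist_triangle Hdist (g (sel (a + j)%nat)) (iter (a + S j) g p) (sel (a + S j)%nat)).
    lra.
Qed.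

(** If the orbit spends arbitrarily long runs in a region [F] whose [eta0]-neighbourhood
    lies in [A], then for every [del] the omega-limit set contains a [del]-cycle in [A]:
    along a long run the orbit returns close to itself (bounded return time), and the
    points of the omega-limit set shadowing this stretch lie in [A]. *)
Lemma omega_cycles_in_runs (A F : P -> Prop) eta0 : 0 < eta0 ->
  (forall a b, F a -> dist a b < eta0 -> A b) ->
  (forall T B, (1 <= B)%nat ->
     exists i0, (T <= i0)%nat /\ forall j, (i0 <= j < i0 + B)%nat -> F (iter j g p)) ->
  forall del, 0 < del -> exists q k xs, chain_in dist g del (fun a => omega a /\ A a) xs k q q.
Proof.
  intros Heta0 HFA Hruns del Hdel.
  destruct (uniform_continuity (del / 3) ltac:(lra)) as [eta [Heta HU]].
  set (e := Rmin eta (Rmin (del / 3) eta0)).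
  assert (He : 0 < e) by (apply Rmin_glb_lt; [|apply Rmin_glb_lt]; lra).
  assert (He1 : e <= eta) by apply Rmin_l.
  assert (He2 : e <= del / 3) by (eapply Rle_trans; [apply Rmin_r | apply Rmin_l]).
  assert (He3 : e <= eta0) by (eapply Rle_trans; [apply Rmin_r | apply Rmin_r]).
  destruct (omega_near_orbit e He) as [T [sel Hsel]].
  destruct (bounded_return (fun n => iter n g p) (del / 3) ltac:(lra)) as [L HL].
  destruct (Hruns T (S L) ltac:(lia)) as [i0 [Hi0 Hrun]].
  destruct (HL i0) as [a [b [Hab [HbL Hret]]]].
  set (k := (b - a)%nat).
  assert (Hgood : forall t, (a <= t <= b)%nat -> omega (sel t) /\ A (sel t)).
  { intros t Ht. destruct (Hsel t ltac:(lia)) as [Ho Hclose]. split; [exact Ho|].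
    apply (HFA (iter t g p)); [apply Hrun; lia | lra]. }
  exists (sel a), k, (fun j => if (j =? k)%nat then sel a else sel (a + j)%nat).
  split; [|split; [|split]].
  - apply (cycle_near_return sel a k del e eta HU He1 He2); [unfold k; lia | |].
    + intros j Hj. apply Hsel. lia.
    + replace (a + k)%nat with b by (unfold k; lia). exact Hret.
  - intros j Hj. destruct (Nat.eqb_spec j k); apply Hgood; unfold k in *; lia.
  - destruct (Nat.eqb_spec 0 k); [unfold k in *; lia|]. rewrite Nat.add_0_r. reflexivity.
  - rewrite Nat.eqb_refl. reflexivity.
Qed.

End OmegaLimitSet.

End CompactSystem.

Arguments omega {P} dist g p q.

(** ** The product system *)

Section ProductSystem.
Variables (X : Type) (d : X -> X -> R) (f : X -> X).

Definition pair_dist (q q' : X * X) : R := Rmax (d (fst q) (fst q')) (d (snd q) (snd q')).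
Definition pair_map (q : X * X) : X * X := (f (fst q), f (snd q)).

Lemma iter_pair_map n q : iter n pair_map q = (iter n f (fst q), iter n f (snd q)).
Proof. induction n as [|n IH]; [destruct q; reflexivity | simpl; rewrite IH; reflexivity]. Qed.

Lemma pair_dist_lt q q' eps :
  pair_dist q q' < eps <-> d (fst q) (fst q') < eps /\ d (snd q) (snd q') < eps.
Proof.
  unfold pair_dist. split.
  - intros H. split; eapply Rle_lt_trans; [apply Rmax_l | exact H | apply Rmax_r | exact H].
  - intros [H1 H2]. apply Rmax_lub_lt; assumption.
Qed.

Lemma pair_dist_metric : is_metric d -> is_metric pair_dist.
Proof.
  intros Hd. unfold pair_dist. split; [|split; [|split]].
  - intros q q'. apply Rle_trans with (d (fst q) (fst q')); [apply (dist_nonneg Hd) | apply Rmax_l].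
  - intros [a b] [a' b']; simpl. split.
    + intros H. pose proof (Rmax_l (d a a') (d b b')). pose proof (Rmax_r (d a a') (d b b')).
      pose proof (dist_nonneg Hd a a'). pose proof (dist_nonneg Hd b b').
      assert (a = a') by (apply (dist_zero Hd); lra).
      assert (b = b') by (apply (dist_zero Hd); lra).
      subst. reflexivity.
    + intros E. injection E as -> ->. rewrite !(dist_self Hd). apply Rmax_left. lra.
  - intros q q'. rewrite (dist_sym Hd (fst q)), (dist_sym Hd (snd q)). reflexivity.
  - intros q q' q''. apply Rmax_lub.
    + apply Rle_trans with (d (fst q) (fst q') + d (fst q') (fst q''));
        [apply (dist_triangle Hd) | apply Rplus_le_compat; apply Rmax_l].
    + apply Rle_trans with (d (snd q) (snd q') + d (snd q') (snd q''));
        [apply (dist_triangle Hd) | apply Rplus_le_compat; apply Rmax_r].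
Qed.

Lemma pair_map_continuous : is_continuous d f -> is_continuous pair_dist pair_map.
Proof.
  intros Hf [a b] eps Heps.
  destruct (Hf a eps Heps) as [da [Hda Ha]]. destruct (Hf b eps Heps) as [db [Hdb Hb]].
  exists (Rmin da db). split; [apply Rmin_glb_lt; assumption|].
  intros [a' b'] H. apply pair_dist_lt in H. simpl in H. destruct H as [H1 H2].
  apply pair_dist_lt. simpl. split.
  - apply Ha. apply Rlt_le_trans with (Rmin da db); [exact H1 | apply Rmin_l].
  - apply Hb. apply Rlt_le_trans with (Rmin da db); [exact H2 | apply Rmin_r].
Qed.

(** A cluster point of the second coordinates along a subsequence on which the first
    coordinates converge gives a cluster point of the pairs. *)
Lemma pair_seq_compact : seq_compact d -> seq_compact pair_dist.
Proof.
  intros Hs s.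
  destruct (Hs (fun n => fst (s n))) as [z Hz].
  destruct (choice (fun k n => (k <= n)%nat /\ d (fst (s n)) z < inv_succ k)) as [h Hh].
  { intros k. exact (Hz _ (inv_succ_pos k) k). }
  destruct (Hs (fun k => snd (s (h k)))) as [w Hw].
  exists (z, w). intros eps Heps N.
  destruct (inv_succ_small eps Heps) as [K HK].
  destruct (Hw eps Heps (Nat.max N K)) as [k [Hk Hkw]].
  destruct (Hh k) as [Hhk Hhz]. specialize (HK k ltac:(lia)).
  exists (h k). split; [lia|]. apply pair_dist_lt. simpl. split; [lra | exact Hkw].
Qed.

Lemma pair_totally_bounded : totally_bounded d -> totally_bounded pair_dist.
Proof.
  intros Hb e He. destruct (Hb e He) as [l Hl]. exists (list_prod l l). intros [a b].
  destruct (Hl a) as [c1 [Hc1 Hd1]]. destruct (Hl b) as [c2 [Hc2 Hd2]].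
  exists (c1, c2). split; [apply in_prod; assumption | apply pair_dist_lt; auto].
Qed.

Lemma is_chain_fst del ps k :
  is_chain pair_dist pair_map del ps k -> is_chain d f del (fun i => fst (ps i)) k.
Proof.
  intros [Hk Hps]. split; [exact Hk|]. intros i Hi.
  eapply Rle_trans; [apply Rmax_l | exact (Hps i Hi)].
Qed.

Lemma is_chain_snd del ps k :
  is_chain pair_dist pair_map del ps k -> is_chain d f del (fun i => snd (ps i)) k.
Proof.
  intros [Hk Hps]. split; [exact Hk|]. intros i Hi.
  eapply Rle_trans; [apply Rmax_r | exact (Hps i Hi)].
Qed.

Lemma chain_in_fst del (A : X * X -> Prop) (C : X -> Prop) ps k a b :
  (forall q, A q -> C (fst q)) -> chain_in pair_dist pair_map del A ps k a b ->
  chain_in d f del C (fun i => fst (ps i)) k (fst a) (fst b).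
Proof.
  intros HAC (Hch & HA & H0 & Hk). split; [apply is_chain_fst, Hch|].
  split; [intros i Hi; apply HAC, HA, Hi|]. split; [exact (f_equal fst H0) | exact (f_equal fst Hk)].
Qed.

Lemma chain_in_snd del (A : X * X -> Prop) (C : X -> Prop) ps k a b :
  (forall q, A q -> C (snd q)) -> chain_in pair_dist pair_map del A ps k a b ->
  chain_in d f del C (fun i => snd (ps i)) k (snd a) (snd b).
Proof.
  intros HAC (Hch & HA & H0 & Hk). split; [apply is_chain_snd, Hch|].
  split; [intros i Hi; apply HAC, HA, Hi|]. split; [exact (f_equal snd H0) | exact (f_equal snd Hk)].
Qed.

Lemma pair_CR_components q : CR pair_dist pair_map q -> CR d f (fst q) /\ CR d f (snd q).
Proof.
  intros Hq. split; intros del Hdel; destruct (Hq del Hdel) as (k & ps & Hch & H0 & Hk); exists k.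
  - exists (fun i => fst (ps i)). split; [apply is_chain_fst, Hch|].
    split; [exact (f_equal fst H0) | exact (f_equal fst Hk)].
  - exists (fun i => snd (ps i)). split; [apply is_chain_snd, Hch|].
    split; [exact (f_equal snd H0) | exact (f_equal snd Hk)].
Qed.

End ProductSystem.

Arguments pair_dist {X} d q q'.
Arguments pair_map {X} f q.

(** ** The DC1-pair *)

Section DC1Pair.
Variables (X : Type) (d : X -> X -> R) (f : X -> X) (x y : X).
Hypothesis Hd : is_metric d.
Hypothesis Hcpt : is_compact d.
Hypothesis Hf : is_continuous d f.

Let HD : is_metric (pair_dist d) := pair_dist_metric X d Hd.
Let HS : seq_compact (pair_dist d) := pair_seq_compact X d (compact_seq_compact X d Hd Hcpt).
Let HN : totally_bounded (pair_dist d) :=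
  pair_totally_bounded X d (compact_totally_bounded X d Hd Hcpt).
Let HF : is_continuous (pair_dist d) (pair_map f) := pair_map_continuous X d f Hf.

Local Notation Omega := (omega (pair_dist d) (pair_map f) (x, y)).

Lemma omega_in_omega_pair z w : Omega (z, w) -> in_omega_pair d f x y z w.
Proof.
  intros H eps Heps N. destruct (H eps Heps N) as [n [Hn Hnear]].
  rewrite iter_pair_map in Hnear. apply pair_dist_lt in Hnear. exists n. auto.
Qed.

Lemma omega_components_CR q : Omega q -> CR d f (fst q) /\ CR d f (snd q).
Proof. intros Hq. apply pair_CR_components, (omega_CR _ _ _ HD HS HF _ _ Hq). Qed.

(** Close approaches of the two orbits at arbitrarily late times give a diagonal point
    of [Omega], the diagonal being closed. *)
Lemma diagonal_omega_point :
  (forall del, 0 < del ->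
     is_limsup (fun n => INR (count_lt (fun i => d (iter i f x) (iter i f y)) del n) / INR n) 1) ->
  exists u, Omega (u, u).
Proof.
  intros Hclose.
  destruct (omega_meets_closed _ _ (pair_map f) HD HS (x, y) (fun q => fst q = snd q))
    as [[u v] [Hq Huv]].
  - intros [a b] Happrox. simpl. apply (dist_zero Hd).
    apply Rle_antisym; [|apply (dist_nonneg Hd)]. apply Rnot_lt_le. intros Hpos.
    destruct (Happrox (d a b / 2) ltac:(lra)) as [[a' b'] [Hdiag Hnear]].
    simpl in Hdiag. subst b'. apply pair_dist_lt in Hnear. simpl in Hnear.
    destruct Hnear as [Ha Hb].
    pose proof (dist_triangle Hd a a' b) as Htri. rewrite (dist_sym Hd a a') in Htri. lra.
  - intros eps Heps N.
    destruct (frequently_close _ _ (Hclose eps Heps) N) as [n [Hn Hlt]].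
    exists n, (iter n f x, iter n f x). split; [exact Hn|]. split; [reflexivity|].
    rewrite iter_pair_map. apply pair_dist_lt. simpl.
    split; [rewrite (dist_self Hd); lra | rewrite (dist_sym Hd); exact Hlt].
  - simpl in Huv. subst v. exists u. exact Hq.
Qed.

Definition far_pair (r : R) (q : X * X) : Prop := r <= d (fst q) (snd q).

Lemma far_pair_closed r : closed_set (pair_dist d) (far_pair r).
Proof.
  intros [a b] Happrox. unfold far_pair. simpl. apply Rnot_lt_le. intros Hlt.
  destruct (Happrox ((r - d a b) / 4) ltac:(lra)) as [[a' b'] [Hfar Hnear]].
  unfold far_pair in Hfar. apply pair_dist_lt in Hnear. simpl in Hfar, Hnear.
  destruct Hnear as [Ha Hb].
  pose proof (dist_triangle Hd a' a b'). pose proof (dist_triangle Hd a b b').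
  rewrite (dist_sym Hd b b') in *. lra.
Qed.

Lemma far_omega_point del0 : 0 < del0 ->
  is_limsup (fun n => INR (count_gt (fun i => d (iter i f x) (iter i f y)) del0 n) / INR n) 1 ->
  exists z w, Omega (z, w) /\ forall del, 0 < del -> exists k ps,
    chain_in (pair_dist d) (pair_map f) del (fun q => Omega q /\ far_pair (del0 / 2) q)
      ps k (z, w) (z, w).
Proof.
  intros Hdel0 Hfar.
  destruct (cycles_at_limit_point _ _ _ HD HS HF (fun q => Omega q /\ far_pair (del0 / 2) q))
    as [[z w] [[Hzw _] Hcyc]].
  - apply closed_set_and; [apply omega_closed, HD | apply far_pair_closed].
  - apply (omega_cycles_in_runs _ _ _ HD HS HN HF (x, y) _
             (fun q => del0 < d (fst q) (snd q)) (del0 / 4)); [lra | |].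
    + intros [a b] [a' b'] Hab Hnear. unfold far_pair. apply pair_dist_lt in Hnear.
      simpl in Hab, Hnear |- *. destruct Hnear as [Ha Hb].
      pose proof (dist_triangle Hd a a' b). pose proof (dist_triangle Hd a' b' b).
      rewrite (dist_sym Hd b' b) in *. lra.
    + intros T B HB. destruct (long_far_run _ _ T B HB Hfar) as [i0 [Hi0 Hrun]].
      exists i0. split; [exact Hi0|]. intros j Hj. rewrite iter_pair_map. apply Hrun, Hj.
  - exists z, w. split; [exact Hzw | exact Hcyc].
Qed.

Lemma sim_through_diagonal z w u : Omega (z, w) -> Omega (u, u) -> CR_sim d f z w.
Proof.
  intros Hzw Hu. destruct (omega_components_CR _ Hzw) as [Cz Cw].
  assert (HC1 : forall q, Omega q -> CR d f (fst q)) by (intros q Hq; apply omega_components_CR, Hq).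
  assert (HC2 : forall q, Omega q -> CR d f (snd q)) by (intros q Hq; apply omega_components_CR, Hq).
  apply (CR_sim_via_hub X d f z w u Cz Cw). intros del Hdel.
  destruct (omega_chain_connected _ _ _ HD HS HF _ _ _ del Hdel Hzw Hu) as [k1 [ps Hps]].
  destruct (omega_chain_connected _ _ _ HD HS HF _ _ _ del Hdel Hu Hzw) as [k2 [qs Hqs]].
  exists k1, k2, (fun i => fst (ps i)), (fun i => snd (ps i)),
    (fun i => fst (qs i)), (fun i => snd (qs i)).
  split; [|split; [|split]].
  - exact (chain_in_fst X d f _ _ _ _ _ _ _ HC1 Hps).
  - exact (chain_in_snd X d f _ _ _ _ _ _ _ HC2 Hps).
  - exact (chain_in_fst X d f _ _ _ _ _ _ _ HC1 Hqs).
  - exact (chain_in_snd X d f _ _ _ _ _ _ _ HC2 Hqs).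
Qed.

Lemma star_from_far_cycles z w r : 0 < r -> Omega (z, w) ->
  (forall del, 0 < del -> exists k ps,
     chain_in (pair_dist d) (pair_map f) del (fun q => Omega q /\ far_pair r q) ps k (z, w) (z, w)) ->
  property_star d f z w.
Proof.
  intros Hr Hzw Hcyc. destruct (omega_components_CR _ Hzw) as [Cz Cw].
  apply (property_star_of_cycles X d f z w (r / 2) Cz Cw ltac:(lra)).
  intros del Hdel. destruct (Hcyc del Hdel) as [k [ps Hps]].
  exists k, (fun i => fst (ps i)), (fun i => snd (ps i)). split; [|split].
  - refine (chain_in_fst X d f del _ _ ps k (z, w) (z, w) _ Hps).
    intros q [Hq _]. apply omega_components_CR, Hq.
  - refine (chain_in_snd X d f del _ _ ps k (z, w) (z, w) _ Hps).
    intros q [Hq _]. apply omega_components_CR, Hq.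
  - intros i Hi. destruct Hps as (_ & HA & _). destruct (HA i Hi) as [_ Hfar].
    unfold far_pair in Hfar. lra.
Qed.

End DC1Pair.

Theorem propositionA1 (X : Type) (d : X -> X -> R) (f : X -> X)
  (Hd : is_metric d) (Hcpt : is_compact d) (Hf : is_continuous d f)
  (x y : X) (Hxy : DC1_pair d f x y) :
  exists z w : X,
    in_omega_pair d f x y z w /\ CR d f z /\ CR d f w /\
    CR_sim d f z w /\ property_star d f z w.
Proof.
  destruct Hxy as [Hclose [del0 [Hdel0 Hfar]]].
  destruct (diagonal_omega_point X d f x y Hd Hcpt Hclose) as [u Hu].
  destruct (far_omega_point X d f x y Hd Hcpt Hf del0 Hdel0 Hfar) as [z [w [Hzw Hcycles]]].
  destruct (omega_components_CR X d f x y Hd Hcpt Hf (z, w) Hzw) as [Cz Cw].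
  exists z, w. split; [|split; [exact Cz | split; [exact Cw | split]]].
  - exact (omega_in_omega_pair X d f x y z w Hzw).
  - exact (sim_through_diagonal X d f x y Hd Hcpt Hf z w u Hzw Hu).
  - exact (star_from_far_cycles X d f x y Hd Hcpt Hf z w (del0 / 2) ltac:(lra) Hzw Hcycles).
Qed.
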